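(* Let $\mathcal A\in\mathbb Q^{n\times n\times n_3}$. Then $\mathtt{bcirc_z}(\mathcal A^k)=\mathtt{bcirc_z}(\mathcal A)^k$ for every positive integer $k$. If moreover $\mathcal A$ is invertible, then $\mathtt{bcirc_z}(\mathcal A^{-1})=\mathtt{bcirc_z}(\mathcal A)^{-1}$.
   Context: $\mathbb Q$ denotes the real quaternions $a_0+a_1\mathbf i+a_2\mathbf j+a_3\mathbf k$ with the usual Hamilton multiplication; $\mathbb C$ is identified with $\{a_0+a_1\mathbf i\}$. Every quaternion array $A=A_0+A_1\mathbf i+A_2\mathbf j+A_3\mathbf k$ (real $A_t$) is written uniquely as $A=A_{\mathbf d}+\mathbf jA_{\mathbf c}$ with $A_{\mathbf d}=A_0+A_1\mathbf i$, $A_{\mathbf c}=A_2-A_3\mathbf i$ complex. For $\mathcal A\in\mathbb Q^{n_1\times n_2\times n_3}$, $\mathcal A^{(s)}=\mathcal A(:,:,s)$. For a complex tensor $\mathcal C$, $\mathtt{bcirc}(\mathcal C)$ is the $n_1n_3\times n_2n_3$ block circulant matrix with $(p,q)$ block $\mathcal C^{(((p-q)\bmod n_3)+1)}$. $P_{n_3}$ is the permutation matrix with first row $e_1^T$ and $r$-th row $e_{n_3+2-r}^T$ for $r\ge2$. $\mathtt{bcirc_z}(\mathcal A)=\mathtt{bcirc}(\mathcal A_{\mathbf d})+\mathbf j\,\mathtt{bcirc}(\mathcal A_{\mathbf c})(P_{n_3}\otimes I_{n_2})$. $\mathtt{unfold}(\mathcal B)=[\mathcal B^{(1)};\dots;\mathcal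 B^{(n_3)}]$, $\mathtt{fold}$ its inverse. QT-product: $\mathcal A*_Q\mathcal B=\mathtt{fold}(\mathtt{bcirc_z}(\mathcal A)\,\mathtt{unfold}(\mathcal B))$. The identity tensor $\mathcal I\in\mathbb Q^{n\times n\times n_3}$ has first frontal slice $I_n$ and all other frontal slices zero. Powers: $\mathcal A^1=\mathcal A$, $\mathcal A^{k+1}=\mathcal A*_Q\mathcal A^k$. $\mathcal A$ is invertible if there is $\mathcal A^{-1}$ with $\mathcal A*_Q\mathcal A^{-1}=\mathcal A^{-1}*_Q\mathcal A=\mathcal I$. *)

From HB Require Import structures.
From mathcomp Require Import all_boot all_order all_algebra.
From mathcomp Require Import ring.
From mathcomp Require Import reals.
Set Implicit Arguments. Unset Strict Implicit. Unset Printing Implicit Defensive.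
Import Order.TTheory GRing.Theory Num.Theory.
Local Open Scope ring_scope.

Record quat (R : Type) := Quat { q0 : R; q1 : R; q2 : R; q3 : R }.
Arguments Quat {R}.

Section QuatEqChoice.
Variable R : Type.
Definition seq_of_quat (x : quat R) := [:: q0 x; q1 x; q2 x; q3 x].
Definition quat_of_seq (s : seq R) :=
  if s is [:: a; b; c; d] then Some (Quat a b c d) else None.
Lemma seq_of_quatK : pcancel seq_of_quat quat_of_seq. Proof. by case. Qed.
End QuatEqChoice.

HB.instance Definition _ (R : eqType) := Equality.copy (quat R)
  (pcan_type (@seq_of_quatK R)).
HB.instance Definition _ (R : choiceType) := Choice.copy (quat R)
  (pcan_type (@seq_of_quatK R)).

Section QuatRing.
Variable R : comNzRingType.
Implicit Types x y z : quat R.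

Definition qadd x y := Quat (q0 x + q0 y) (q1 x + q1 y) (q2 x + q2 y) (q3 x + q3 y).
Definition qopp x := Quat (- q0 x) (- q1 x) (- q2 x) (- q3 x).
Definition qzero : quat R := Quat 0 0 0 0.
Definition qone : quat R := Quat 1 0 0 0.
(* Hamilton product: i^2 = j^2 = k^2 = ijk = -1 *)
Definition qmul x y := Quat
  (q0 x * q0 y - q1 x * q1 y - q2 x * q2 y - q3 x * q3 y)
  (q0 x * q1 y + q1 x * q0 y + q2 x * q3 y - q3 x * q2 y)
  (q0 x * q2 y - q1 x * q3 y + q2 x * q0 y + q3 x * q1 y)
  (q0 x * q3 y + q1 x * q2 y - q2 x * q1 y + q3 x * q0 y).

Lemma qaddA : associative qadd.
Proof. by move=> [a b c d] [e f g h] [k l m n]; rewrite /qadd /= !addrA. Qed.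
Lemma qaddC : commutative qadd.
Proof. by move=> [a b c d] [e f g h]; rewrite /qadd /= [a + _]addrC [b + _]addrC [c + _]addrC [d + _]addrC. Qed.
Lemma qadd0 : left_id qzero qadd.
Proof. by move=> [a b c d]; rewrite /qadd /= !add0r. Qed.
Lemma qaddN : left_inverse qzero qopp qadd.
Proof. by move=> [a b c d]; rewrite /qadd /= !addNr. Qed.

HB.instance Definition _ := GRing.isZmodule.Build (quat R) qaddA qaddC qadd0 qaddN.

Lemma qmulA : associative qmul.
Proof. by move=> [a b c d] [e f g h] [k l m n]; rewrite /qmul /=; congr Quat; ring. Qed.
Lemma qmul1 : left_id qone qmul.
Proof. by move=> [a b c d]; rewrite /qmul /=; congr Quat; ring. Qed.
Lemma qmulr1 : right_id qone qmul.
Proof. by move=> [a b c d]; rewrite /qmul /=; congr Quat; ring. Qed.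
Lemma qmulDl : left_distributive qmul qadd.
Proof. by move=> [a b c d] [e f g h] [k l m n]; rewrite /qmul /qadd /=; congr Quat; ring. Qed.
Lemma qmulDr : right_distributive qmul qadd.
Proof. by move=> [a b c d] [e f g h] [k l m n]; rewrite /qmul /qadd /=; congr Quat; ring. Qed.
Lemma qone_neq0 : qone != qzero.
Proof. by apply/eqP => -[] /eqP; rewrite oner_eq0. Qed.

HB.instance Definition _ := GRing.Zmodule_isNzRing.Build (quat R)
  qmulA qmul1 qmulr1 qmulDl qmulDr qone_neq0.

Definition qi : quat R := Quat 0 1 0 0.
Definition qj : quat R := Quat 0 0 1 0.
Definition qk : quat R := Quat 0 0 0 1.
End QuatRing.

(* A tensor in Q^{n1 x n2 x n3} is given by its n3 frontal slices;
   slice s (0-based) is A^{(s+1)} in the paper. *)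
Definition qtensor (R : comNzRingType) (n1 n2 n3 : nat) :=
  {ffun 'I_n3 -> 'M[quat R]_(n1, n2)}.

Section Tensors.
Variable R : comNzRingType.

(* Row-major decomposition of an index of 'I_(m * n) into a pair
   (block index, index inside the block); inverse of mxvec_index. *)
Definition blk m n (r : 'I_(m * n)) : 'I_m * 'I_n :=
  enum_val (cast_ord (esym (mxvec_cast m n)) r).

(* A = A_d + j A_c with A_d = A0 + A1 i, A_c = A2 - A3 i (complex numbers
   identified with the quaternions a0 + a1 i). *)
Definition qd (x : quat R) : quat R := Quat (q0 x) (q1 x) 0 0.
Definition qc (x : quat R) : quat R := Quat (q2 x) (- q3 x) 0 0.

Definition tmap n1 n2 n3 (f : quat R -> quat R) (A : qtensor R n1 n2 n3)
  : qtensor R n1 n2 n3 := [ffun s => map_mx f (A s)].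
Definition tpart_d n1 n2 n3 (A : qtensor R n1 n2 n3) := tmap qd A.
Definition tpart_c n1 n2 n3 (A : qtensor R n1 n2 n3) := tmap qc A.

Definition bcirc n1 n2 n3 (C : qtensor R n1 n2 n3) : 'M[quat R]_(n3 * n1, n3 * n2) :=
  \matrix_(r, c)
    let p := (blk r).1 in let q := (blk c).1 in
    C (insubd p ((p + n3 - q) %% n3)%N) (blk r).2 (blk c).2.

Definition kron m1 n1 m2 n2 (A : 'M[quat R]_(m1, n1)) (B : 'M[quat R]_(m2, n2))
  : 'M[quat R]_(m1 * m2, n1 * n2) :=
  \matrix_(r, c) (A (blk r).1 (blk c).1 * B (blk r).2 (blk c).2).

(* P_{n3}: first row e_1^T, r-th row (r >= 2) e_{n3+2-r}^T; 0-based: row r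
   has its 1 in column (n3 - r) mod n3. *)
Definition Pperm n3 : 'M[quat R]_n3 :=
  \matrix_(r, c) (((c : nat) == ((n3 - r) %% n3)%N)%:R).

Definition bcirc_z n1 n2 n3 (A : qtensor R n1 n2 n3) : 'M[quat R]_(n3 * n1, n3 * n2) :=
  bcirc (tpart_d A) + qj R *: (bcirc (tpart_c A) *m kron (Pperm n3) (1%:M : 'M_n2)).

Definition tunfold n1 n2 n3 (B : qtensor R n1 n2 n3) : 'M[quat R]_(n3 * n1, n2) :=
  \matrix_(r, c) B (blk r).1 (blk r).2 c.

Definition tfold n1 n2 n3 (M : 'M[quat R]_(n3 * n1, n2)) : qtensor R n1 n2 n3 :=
  [ffun s => \matrix_(i, c) M (mxvec_index s i) c].

Definition qtprod n1 n2 m n3 (A : qtensor R n1 n2 n3) (B : qtensor R n2 m n3)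
  : qtensor R n1 m n3 := tfold (bcirc_z A *m tunfold B).

Definition qtid n n3 : qtensor R n n n3 :=
  [ffun s : 'I_n3 => if (s : nat) == 0%N then 1%:M else 0].

(* qtpow_ A k = A^(k+1):  A^1 = A, A^(k+1) = A *_Q A^k *)
Fixpoint qtpow_ n n3 (A : qtensor R n n n3) (k : nat) : qtensor R n n n3 :=
  if k is k'.+1 then qtprod A (qtpow_ A k') else A.
(* A^k for k >= 1 *)
Definition qtpow n n3 (A : qtensor R n n n3) (k : nat) := qtpow_ A k.-1.

Definition qt_invertible n n3 (A : qtensor R n n n3) :=
  exists B : qtensor R n n n3, qtprod A B = qtid n n3 /\ qtprod B A = qtid n n3.
End Tensors.

From HB Require Import structures.
From mathcomp Require Import all_boot all_order all_algebra ring.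
From mathcomp Require Import reals.
Set Implicit Arguments. Unset Strict Implicit. Unset Printing Implicit Defensive.
Import GRing.Theory.
Local Open Scope ring_scope.

(* Write x = x_d + j x_c and J x := j x_c (qd x and qjc x below).  The splitting Q = C (+) jC is a
   Z/2-grading: (x y)_d = x_d y_d + J x J y and J (x y) = x_d J y + J x y_d.
   With n3 = m + 1 and slices indexed by Z/(m+1), the (p, q) block of
   bcirc_z A has complex part A_(p-q) and j-part A_(p+q) (the permutation
   P_n3 turns the column index q into -q).  Expanding the (p, q) block of
   bcirc_z A * bcirc_z B with the grading and translating the summation
   index by +-q yields exactly the blocks of bcirc_z (A *_Q B); so bcirc_z
   is multiplicative, it maps the identity tensor to the identity matrix,
   and both claims follow.  For n3 = 0 all matrices involved are empty. *)

Lemma blk_mxvec m n (i : 'I_m) (j : 'I_n) : blk (mxvec_index i j) = (i, j).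
Proof. by rewrite /blk /mxvec_index cast_ordK enum_rankK. Qed.

Lemma eq_mxvec_index m n (p q : 'I_m) (i l : 'I_n) :
  (mxvec_index p i == mxvec_index q l) = (p == q) && (i == l).
Proof.
rewrite -xpair_eqE; apply/eqP/eqP => [e | [-> ->] //].
by have := congr1 (@blk _ _) e; rewrite !blk_mxvec.
Qed.

Lemma big_mxvec_index (M : nmodType) m n (F : 'I_(m * n) -> M) :
  \sum_t F t = \sum_(x : 'I_m * 'I_n) F (mxvec_index x.1 x.2).
Proof.
rewrite (reindex (uncurry (@mxvec_index m n))); first by apply: eq_bigr => -[].
by case: (curry_mxvec_bij m n) => g gK Kg; exists g => [x|t] _; [exact: gK|exact: Kg].
Qed.

Lemma big_translate_fst (M : nmodType) (V : finZmodType) (I : finType)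
    (c : V) (F : V * I -> M) :
  \sum_x F x = \sum_x F (x.1 + c, x.2).
Proof.
rewrite (reindex_inj (h := fun x : V * I => (x.1 + c, x.2))) //.
by move=> [a i] [b j] [/addIr -> ->].
Qed.

Section BlockCirculant.
Variable R : comNzRingType.
Implicit Types x y u v : quat R.

Definition qjc x := qj R * qc x.

Lemma quat_ext x y :
  q0 x = q0 y -> q1 x = q1 y -> q2 x = q2 y -> q3 x = q3 y -> x = y.
Proof. by case: x y => a b c d [e f g h] /= -> -> -> ->. Qed.

Ltac quat_ring := apply: quat_ext; rewrite /qjc /=; ring.

Lemma qdD x y : qd (x + y) = qd x + qd y. Proof. quat_ring. Qed.
Lemma qd0 : qd 0 = 0 :> quat R. Proof. quat_ring. Qed.
Lemma qjcD x y : qjc (x + y) = qjc x + qjc y. Proof. quat_ring. Qed.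
Lemma qjc0 : qjc 0 = 0. Proof. quat_ring. Qed.

Lemma qd_nat (b : bool) : qd b%:R = b%:R :> quat R.
Proof. by case: b; quat_ring. Qed.
Lemma qjc_nat (b : bool) : qjc b%:R = 0.
Proof. by case: b; quat_ring. Qed.

(* Stated for the element with parts qd u and qjc v, since an entry of
   bcirc_z takes its two parts from different slices. *)
Lemma qdM_graded u v y : qd ((qd u + qjc v) * y) = qd u * qd y + qjc v * qjc y.
Proof. quat_ring. Qed.
Lemma qjcM_graded u v y : qjc ((qd u + qjc v) * y) = qd u * qjc y + qjc v * qd y.
Proof. quat_ring. Qed.

Variable m : nat.
Local Notation n3 := m.+1.

Lemma bcirc_mxvec n1 n2 (X : qtensor R n1 n2 n3) p i q l :
  bcirc X (mxvec_index p i) (mxvec_index q l) = X (p - q) i l.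
Proof.
rewrite mxE !blk_mxvec /=; congr (X _ i l); apply: val_inj.
by rewrite val_insubd ltn_pmod //= modnDmr addnBA // ltnW.
Qed.

Lemma Pperm_mxE (t q : 'I_n3) : Pperm R n3 t q = (t == - q)%:R.
Proof. by rewrite mxE eq_sym -eqr_oppLR. Qed.

Lemma mulmx_Pperm_kron1 n1 n2 (M : 'M[quat R]_(n1, n3 * n2)) r q l :
  (M *m kron (Pperm R n3) 1%:M) r (mxvec_index q l) = M r (mxvec_index (- q) l).
Proof.
have kronE t k : kron (Pperm R n3) 1%:M (mxvec_index t k) (mxvec_index q l)
                 = ((t == - q) && (k == l))%:R :> quat R.
  by rewrite mxE !blk_mxvec /= Pperm_mxE mxE -natrM mulnb.
rewrite mxE big_mxvec_index (bigD1 (- q, l)) //= kronE !eqxx mulr1 big1 ?addr0 //.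
by move=> [t k] /= tk; rewrite kronE -xpair_eqE (negbTE tk) mulr0.
Qed.

Lemma bcirc_z_mxvec n1 n2 (A : qtensor R n1 n2 n3) p i q l :
  bcirc_z A (mxvec_index p i) (mxvec_index q l)
  = qd (A (p - q) i l) + qjc (A (p + q) i l).
Proof.
by rewrite /bcirc_z mxE bcirc_mxvec [X in _ + X]mxE mulmx_Pperm_kron1
  bcirc_mxvec !ffunE !mxE opprK.
Qed.

Lemma qtprodE n1 n2 n4 (A : qtensor R n1 n2 n3) (B : qtensor R n2 n4 n3) s i l :
  qtprod A B s i l = \sum_(x : 'I_n3 * 'I_n2)
     (qd (A (s - x.1) i x.2) + qjc (A (s + x.1) i x.2)) * B x.1 x.2 l.
Proof.
rewrite ffunE !mxE big_mxvec_index; apply: eq_bigr => x _.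
by rewrite bcirc_z_mxvec !mxE blk_mxvec.
Qed.

Lemma bcirc_zM n (A B : qtensor R n n n3) :
  bcirc_z (qtprod A B) = bcirc_z A *m bcirc_z B.
Proof.
apply/matrixP => r c; case/mxvec_indexP: r => p i; case/mxvec_indexP: c => q l.
rewrite bcirc_z_mxvec !qtprodE (big_morph _ qdD qd0) (big_morph _ qjcD qjc0).
rewrite mxE big_mxvec_index.
under eq_bigr do rewrite qdM_graded.
under [X in _ + X]eq_bigr do rewrite qjcM_graded.
under [RHS]eq_bigr do rewrite !bcirc_z_mxvec mulrDl !mulrDr.
rewrite !big_split /= [LHS]addrACA [X in _ + X = _]addrC.
congr (_ + _ + (_ + _)).
- rewrite [RHS](big_translate_fst q); apply: eq_bigr => x _ /=.
  by rewrite addrK opprD addrA [p - x.1 - q]addrAC.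
- rewrite [RHS](big_translate_fst (- q)); apply: eq_bigr => x _ /=.
  by rewrite subrK opprB addrA.
- rewrite [RHS](big_translate_fst q); apply: eq_bigr => x _ /=.
  by rewrite addrK addrA [p + x.1 + q]addrAC.
- rewrite [RHS](big_translate_fst (- q)); apply: eq_bigr => x _ /=.
  by rewrite subrK addrA [p + x.1 - q]addrAC.
Qed.

Lemma bcirc_z_qtpow n (A : qtensor R n n n3) k :
  bcirc_z (qtpow_ A k) = bcirc_z A ^+ k.+1.
Proof.
elim: k => [|k IH]; first by rewrite expr1.
by rewrite /= bcirc_zM IH [RHS]exprS mulmxE.
Qed.

Lemma bcirc_z_qtid n : bcirc_z (qtid R n n3) = 1%:M.
Proof.
apply/matrixP => r c; case/mxvec_indexP: r => p i; case/mxvec_indexP: c => q l.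
rewrite bcirc_z_mxvec !ffunE !mxE eq_mxvec_index -subr_eq0.
have qjc_id (s : 'I_n3) : qjc ((if val s == 0%N then 1%:M else 0) i l) = 0.
  by case: ifP; rewrite mxE ?qjc_nat ?qjc0.
rewrite qjc_id addr0 -[(_ == 0%N)]/(_ == 0 :> 'I_n3).
by case: eqP; rewrite mxE ?qd_nat ?qd0.
Qed.

End BlockCirculant.

Theorem lemma3p4 (R : realType) (n n3 : nat) (A : qtensor R n n n3) :
  (forall k : nat, (0 < k)%N -> bcirc_z (qtpow A k) = bcirc_z A ^+ k) /\
  (forall Ainv : qtensor R n n n3,
     qtprod A Ainv = qtid R n n3 -> qtprod Ainv A = qtid R n n3 ->
     bcirc_z A *m bcirc_z Ainv = 1%:M /\ bcirc_z Ainv *m bcirc_z A = 1%:M).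
Proof.
case: n3 A => [|m] A.
  by split => [k _ | B _ _]; [|split]; apply/matrixP => -[].
split => [[|k] // _ | B AB1 BA1]; first exact: (bcirc_z_qtpow A k).
by split; rewrite -bcirc_zM ?AB1 ?BA1 bcirc_z_qtid.
Qed.
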